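(* Let $d\ge2$. For $R>0$ and $r>0$, $$F_d(R,r)\ll(1+r)\,\kappa_d(R),$$ where $F_d(R,r)$ is the maximal number of points of $\mathbb{Z}^d$ in a spherical cap of size $r$ on the sphere $\{x\in\mathbb{R}^d:|x|=R\}$, and $\kappa_d(R)$ is the maximal number of points of $\mathbb{Z}^d$ in the intersection of this sphere with a hyperplane.
   Context: A spherical cap of size $r$ on the sphere of radius $R$ is the intersection of the sphere with a ball of radius $\approx r$ centered at a point of the sphere. The implied constant is absolute. *)

From mathcomp Require Import all_boot all_order all_algebra.
From mathcomp Require Import boolp classical_sets reals.
Set Implicit Arguments. Unset Strict Implicit. Unset Printing Implicit Defensive.
Import Order.TTheory GRing.Theory Num.Theory.
Local Open Scope ring_scope.
Local Open Scope classical_set_scope.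

Section Defs.
Variables (R : realType) (d : nat).

Definition sqnorm (x : 'rV[R]_d) : R := \sum_(i < d) (x ord0 i) ^+ 2.

Definition latticeb (x : 'rV[R]_d) : bool := [forall i, x ord0 i \is a Num.int].

Definition has_n_lattice_points (S : set 'rV[R]_d) (n : nat) : Prop :=
  exists s : seq 'rV[R]_d,
    [/\ uniq s, size s = n, all latticeb s & forall x, x \in s -> S x].

Definition sphere (Rad : R) : set 'rV[R]_d := [set x | sqnorm x = Rad ^+ 2].

(* spherical cap of size r centered at c (c on the sphere):
   sphere intersected with the closed ball of radius r around c *)
Definition cap (Rad r : R) (c : 'rV[R]_d) : set 'rV[R]_d :=
  sphere Rad `&` [set x | sqnorm (x - c) <= r ^+ 2].

Definition hyperplane (a : 'rV[R]_d) (b : R) : set 'rV[R]_d :=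
  [set x | \sum_(i < d) a ord0 i * x ord0 i = b].

Definition F_d (Rad r : R) : R :=
  sup [set (n%:R : R) | n in
        [set n | exists c, sphere Rad c /\ has_n_lattice_points (cap Rad r c) n]].

Definition kappa_d (Rad : R) : R :=
  sup [set (n%:R : R) | n in
        [set n | exists a b, a != 0 /\
                   has_n_lattice_points (sphere Rad `&` hyperplane a b) n]].

End Defs.

(* On a cap of size r around c, the first coordinate of a lattice point is an
   integer in [c_1 - r, c_1 + r], so it takes at most 2r + 1 values t.  For
   each t the lattice points with x_1 = t lie on the sphere and the hyperplane
   x_1 = t, so there are at most kappa_d(R) of them; hence a cap contains at
   most (2r + 1) kappa_d(R) lattice points.  The sphere carries finitely many
   lattice points, which makes the suprema defining F_d and kappa_d finite. *)
From mathcomp Require Import all_boot all_order all_algebra.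
From mathcomp Require Import boolp classical_sets reals.
From mathcomp Require Import lra zify.
Set Implicit Arguments. Unset Strict Implicit.
Import Order.TTheory GRing.Theory Num.Theory.
Local Open Scope ring_scope.
Local Open Scope classical_set_scope.

Lemma size_le_sum_count (T : eqType) (I : finType) (P : I -> pred T) (s : seq T) :
  (forall x, x \in s -> exists j, P j x) ->
  (size s <= \sum_j count (P j) s)%N.
Proof.
elim: s => [|x s IHs] covered //=.
have [j Pjx] := covered x (mem_head _ _).
rewrite big_split /= (bigD1 j) //= Pjx add1n ltnS.
apply: leq_trans (leq_addl _ _).
by apply: IHs => y ys; apply: covered; rewrite inE ys orbT.
Qed.

Lemma int_interval_cover (R : realType) (a L : R) (z : int) :
  0 <= L -> a <= z%:~R <= a + L ->
  exists j : 'I_(Num.truncn L).+1, z = Num.ceil a + (j : nat)%:Z.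
Proof.
move=> L0 /andP[az zaL].
have ceil_le_z : Num.ceil a <= z by rewrite ceil_le_int.
have gap : ((z - Num.ceil a)%:~R : R) <= L.
  by rewrite rmorphB /=; have := ceil_ge a; lra.
have j_lt : (`|z - Num.ceil a|%N < (Num.truncn L).+1)%N.
  by rewrite ltnS truncn_ge_nat // natr_absz ger0_norm ?subr_ge0.
by exists (Ordinal j_lt) => /=; lia.
Qed.

Section LatticePoints.
Variables (R : realType) (d : nat).
Implicit Types (x c : 'rV[R]_d) (Rad r : R).

Lemma coord_sqr_le_sqnorm x i : x ord0 i ^+ 2 <= sqnorm x.
Proof.
rewrite /sqnorm (bigD1 i) //= lerDl.
by apply: sumr_ge0 => k _; exact: sqr_ge0.
Qed.

Lemma norm_coord_le x i rho : sqnorm x <= rho ^+ 2 -> `|x ord0 i| <= `|rho|.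
Proof.
move=> x_le; rewrite -ler_sqr ?nnegrE ?normr_ge0 // !real_normK ?num_real //.
exact: le_trans (coord_sqr_le_sqnorm x i) x_le.
Qed.

Lemma cap_coord_bound Rad r c x i : 0 <= r -> cap Rad r c x ->
  c ord0 i - r <= x ord0 i <= c ord0 i + r.
Proof.
move=> r0 [_ /= near_c].
by have := norm_coord_le i near_c; rewrite !mxE (ger0_norm r0) ler_distl.
Qed.

Lemma lattice_coordE x i : latticeb x -> x ord0 i = (Num.floor (x ord0 i))%:~R.
Proof. by move=> /forallP /(_ i) /floorK. Qed.

Lemma lattice_box_size (B : nat) (s : seq 'rV[R]_d) :
  uniq s -> all (@latticeb R d) s ->
  (forall x i, x \in s -> `|x ord0 i| <= B%:R) ->
  (size s <= B.*2.+1 ^ d)%N.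
Proof.
move=> s_uniq s_lattice s_box.
have floor_box x i : x \in s -> `|Num.floor (x ord0 i)| <= B.
  move=> xs; rewrite -(ler_int R) intr_norm.
  by rewrite -(lattice_coordE i (allP s_lattice x xs)); exact: s_box.
pose code x : {ffun 'I_d -> 'I_B.*2.+1} :=
  [ffun i => inord (absz (Num.floor (x ord0 i) + B%:Z))].
have code_inj : {in s &, injective code}.
  move=> x y xs ys /ffunP code_xy; apply/rowP => i.
  rewrite (lattice_coordE i (allP s_lattice x xs)).
  rewrite (lattice_coordE i (allP s_lattice y ys)); congr (_%:~R).
  have := congr1 val (code_xy i); rewrite !ffunE.
  have := floor_box x i xs; have := floor_box y i ys.
  move: (Num.floor _) (Num.floor _) => b a b_box a_box.
  by rewrite /= !inordK; lia.
rewrite -(size_map code) -(card_uniqP _); last by rewrite map_inj_in_uniq.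
by apply: leq_trans (max_card _) _; rewrite card_ffun !card_ord.
Qed.

Lemma sphere_lattice_points_bounded Rad : exists N, forall (S : set 'rV[R]_d) n,
  S `<=` sphere Rad -> has_n_lattice_points S n -> (n <= N)%N.
Proof.
pose B := (Num.truncn `|Rad|).+1.
exists (B.*2.+1 ^ d)%N => S n S_sphere [s [s_uniq <- s_lattice s_S]].
apply: lattice_box_size => // x i xs.
apply: le_trans (norm_coord_le i _) (ltW (truncnS_gt _)).
by rewrite (S_sphere x (s_S x xs)).
Qed.

Lemma hyperplane_section_le_kappa_d Rad (a : 'rV[R]_d) b n : a != 0 ->
  has_n_lattice_points (sphere Rad `&` hyperplane a b) n -> n%:R <= kappa_d d Rad.
Proof.
move=> a0 an; apply: ub_le_sup; last by exists n => //; exists a, b.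
have [N N_ub] := sphere_lattice_points_bounded Rad.
exists N%:R => _ [m [a' [b' [_ a'm]]] <-].
by rewrite ler_nat; apply: N_ub a'm => x [].
Qed.

Lemma delta_mx_neq0 (i : 'I_d) : delta_mx ord0 i != 0 :> 'rV[R]_d.
Proof.
by apply/eqP => /rowP /(_ i); rewrite !mxE !eqxx => /eqP; rewrite oner_eq0.
Qed.

Lemma hyperplane_delta_mx (i : 'I_d) t :
  hyperplane (delta_mx ord0 i) t = [set x : 'rV[R]_d | x ord0 i = t].
Proof.
rewrite /hyperplane; congr [set x | _ = t]; apply/funext => x.
rewrite (bigD1 i) //= big1 => [|k k_neq_i]; rewrite mxE.
  by rewrite !eqxx mul1r addr0.
by rewrite (negbTE k_neq_i) andbF mul0r.
Qed.

Lemma kappa_d_ge0 (i : 'I_d) Rad : 0 <= kappa_d d Rad.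
Proof.
apply: (@hyperplane_section_le_kappa_d Rad (delta_mx ord0 i) 0 0).
  exact: delta_mx_neq0.
by exists [::].
Qed.

Lemma sphere_scale_delta_mx (i : 'I_d) Rad : sphere Rad (Rad *: delta_mx ord0 i).
Proof.
rewrite /sphere /sqnorm /= (bigD1 i) //= big1 => [|k k_neq_i]; rewrite !mxE.
  by rewrite !eqxx mulr1 addr0.
by rewrite (negbTE k_neq_i) andbF mulr0 expr0n.
Qed.

Lemma cap_lattice_points_le (i : 'I_d) Rad r c n : 0 <= r ->
  has_n_lattice_points (cap Rad r c) n ->
  n%:R <= (Num.truncn (r *+ 2)).+1%:R * kappa_d d Rad.
Proof.
move=> r0 [s [s_uniq <- s_lattice s_cap]].
pose slice (j : 'I_(Num.truncn (r *+ 2)).+1) : pred 'rV[R]_d :=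
  fun x => x ord0 i == (Num.ceil (c ord0 i - r) + (j : nat)%:Z)%:~R.
have slices_cover x : x \in s -> exists j, slice j x.
  move=> xs; have x_int := lattice_coordE i (allP s_lattice x xs).
  have x_range : c ord0 i - r <= (Num.floor (x ord0 i))%:~R <= c ord0 i - r + r *+ 2.
    rewrite -x_int; have /andP[x_lo x_hi] := cap_coord_bound i r0 (s_cap x xs).
    by apply/andP; split; lra.
  have [j floor_xE] := int_interval_cover (mulrn_wge0 2 r0) x_range.
  by exists j; rewrite /slice x_int floor_xE.
have slice_le j : (count (slice j) s)%:R <= kappa_d d Rad.
  rewrite -size_filter; apply: (hyperplane_section_le_kappa_d (delta_mx_neq0 i)).
  exists (filter (slice j) s); split => //.
  - exact: filter_uniq.
  - by apply/allP => x; rewrite mem_filter => /andP[_]; apply: (allP s_lattice).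
  - move=> x; rewrite mem_filter => /andP[/eqP x_slice xs].
    by split; [case: (s_cap x xs) | rewrite hyperplane_delta_mx; exact: x_slice].
apply: le_trans (_ : (\sum_j count (slice j) s)%:R <= _).
  by rewrite ler_nat; exact: size_le_sum_count.
rewrite natr_sum; apply: le_trans (ler_sum _ (fun j _ => slice_le j)) _.
by rewrite sumr_const card_ord mulr_natl.
Qed.

End LatticePoints.

Theorem lemma2p2 (R : realType) (d : nat) (hd : (2 <= d)%N) :
  exists C : R, 0 < C /\
    forall Rad r : R, 0 < Rad -> 0 < r ->
      F_d d Rad r <= C * (1 + r) * kappa_d d Rad.
Proof.
exists 2; split => // Rad r _ r_gt0.
pose i0 : 'I_d := Ordinal (ltnW hd).
have count_le : (Num.truncn (r *+ 2)).+1%:R <= 2 * (1 + r) :> R.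
  have trunc_le : (Num.truncn (r *+ 2))%:R <= r *+ 2.
    by rewrite truncn_le mulrn_wge0 // ltW.
  by rewrite -addn1 natrD; lra.
apply: ge_sup.
  exists 0; exists 0%N => //; exists (Rad *: delta_mx ord0 i0).
  by split; [exact: sphere_scale_delta_mx | exists [::]].
move=> _ [n [c [_ cn]] <-].
apply: le_trans (cap_lattice_points_le i0 (ltW r_gt0) cn) _.
by apply: ler_wpM2r; [exact: kappa_d_ge0 i0 Rad | exact: count_le].
Qed.
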